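(* Let $C$ be a convex set in a finite-dimensional Euclidean space $\mathcal{E}$ and let $F$ be a face of $C$. The following are equivalent: (i) $F$ is an amenable face of $C$; (ii) $C$ and $\operatorname{aff}F$ are boundedly linearly regular, i.e. for every bounded set $B$ there exists $\kappa_B>0$ such that $\operatorname{dist}(x,F)\le\kappa_B\max\{\operatorname{dist}(x,\operatorname{aff}F),\operatorname{dist}(x,C)\}$ for all $x\in B$; (iii) $C$ and $\operatorname{aff}F$ are subtransversal at every point of $F$.
   Context: A face of a convex set $C$ is a closed convex subset $F\subseteq C$ such that whenever $x,y\in C$ and $\alpha x+(1-\alpha)y\in F$ for some $\alpha\in(0,1)$, then $x,y\in F$; note $F=C\cap\operatorname{aff}F$. A face $F$ of $C$ is amenable if for every bounded set $B$ there exists $\kappa>0$ such that $\operatorname{dist}(x,F)\le\kappa\operatorname{dist}(x,C)$ for all $x\in(\operatorname{aff}F)\cap B$. Sets $C_1,C_2$ are subtransversal at $x^*\in C_1\cap C_2$ if there exist a neighbourhood $U$ of $x^*$ and $\kappa>0$ with $\operatorname{dist}(x,C_1\cap C_2)\le\kappa(\operatorname{dist}(x,C_1)+\operatorname{dist}(x,C_2))$ for all $x\in U$. *)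

From HB Require Import structures.
From mathcomp Require Import all_boot all_order all_algebra.
From mathcomp Require Import all_classical all_reals topology normedtype.
Set Implicit Arguments. Unset Strict Implicit. Unset Printing Implicit Defensive.
Import Order.TTheory GRing.Theory Num.Theory.
Local Open Scope ring_scope.
Local Open Scope classical_set_scope.

Section Defs.
Variables (R : realType) (n : nat).
Notation E := 'rV[R]_n.

Definition enorm (x : E) : R := Num.sqrt (\sum_(i < n) x 0 i ^+ 2).

(* distance to a set (convention: dist to the empty set is inf set0) *)
Definition dist (x : E) (A : set E) : R := inf [set enorm (x - y) | y in A].

Definition eclosed (F : set E) : Prop :=
  forall x, (forall e : R, 0 < e -> exists y, F y /\ enorm (x - y) < e) -> F x.

Definition convex_set (C : set E) : Prop :=
  forall x y a, C x -> C y -> 0 <= a -> a <= 1 -> C (a *: x + (1 - a) *: y).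

Definition aff (A : set E) : set E :=
  [set x | exists (k : nat) (l : 'I_k -> R) (p : 'I_k -> E),
      (forall i, A (p i)) /\ \sum_(i < k) l i = 1 /\ x = \sum_(i < k) l i *: p i].

Definition is_face (C F : set E) : Prop :=
  [/\ F `<=` C, eclosed F, convex_set F &
      forall x y a, C x -> C y -> 0 < a -> a < 1 ->
        F (a *: x + (1 - a) *: y) -> F x /\ F y].

Definition bounded_set (B : set E) : Prop :=
  exists M : R, forall x, B x -> enorm x <= M.

Definition amenable_face (C F : set E) : Prop :=
  forall B, bounded_set B -> exists kappa : R, 0 < kappa /\
    forall x, (aff F `&` B) x -> dist x F <= kappa * dist x C.

Definition bdd_lin_regular_face (C F : set E) : Prop :=
  forall B, bounded_set B -> exists kappa : R, 0 < kappa /\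
    forall x, B x -> dist x F <= kappa * Num.max (dist x (aff F)) (dist x C).

(* C1, C2 subtransversal at xs; "neighbourhood U of xs" unfolded to a
   Euclidean ball around xs *)
Definition subtransversal (C1 C2 : set E) (xs : E) : Prop :=
  (C1 `&` C2) xs /\
  exists delta : R, 0 < delta /\ exists kappa : R, 0 < kappa /\
    forall x, enorm (x - xs) < delta ->
      dist x (C1 `&` C2) <= kappa * (dist x C1 + dist x C2).

End Defs.

(* For a face, C ∩ aff F = F, so all three conditions bound dist(x, F) by the
   distances from x to C and to aff F; they differ in where the bound holds.
   (i) gives (ii) by moving x to a nearly closest point of aff F, and (ii)
   gives (iii) at once.  Conversely, the bounded parts of F are compact, so
   subtransversality holds with a uniform radius d and constant k near each
   of them.  For x in aff F and a nearly closest p in F, the point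
   z = (1 - t) p + t x with |p - z| < d lies in aff F, and convexity of C gives
   dist(z, C) <= t dist(x, C); then dist(x, F) <= (1 - t) |x - p| + dist(z, F)
   <= (1 - t) |x - p| + k t dist(x, C), which forces dist(x, F) <= k dist(x, C). *)

From Pilot Require Import Defs.
From HB Require Import structures.
From mathcomp Require Import all_boot all_order all_algebra.
From mathcomp Require Import all_classical all_reals topology normedtype.
From mathcomp Require Import matrix_normedtype numfun.
From mathcomp Require Import ring lra.
Import Order.TTheory GRing.Theory Num.Theory.
Import numFieldTopology.Exports numFieldNormedType.Exports.
Set Implicit Arguments. Unset Strict Implicit. Unset Printing Implicit Defensive.
Local Open Scope ring_scope.
Local Open Scope classical_set_scope.

Lemma ler_add_small (R : realFieldType) (a b c : R) : 0 <= c ->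
  (forall e, 0 < e -> e <= 1 -> a <= b + e * c) -> a <= b.
Proof.
move=> c_ge0 small; apply/ler_addgt0Pr => e e_gt0.
have c1_gt0 : 0 < c + 1 by rewrite ltr_wpDl.
set e' := Num.min 1 (e / (c + 1)).
have e'_gt0 : 0 < e' by rewrite lt_min ltr01 divr_gt0.
have e'_le1 : e' <= 1 by rewrite ge_min lexx.
have e'c : e' * (c + 1) <= e by rewrite -ler_pdivlMr // ge_min lexx orbT.
by apply: le_trans (small _ e'_gt0 e'_le1) _; nra.
Qed.

Section FaceRegularity.
Variables (R : realType) (n : nat).
Implicit Types (x y z u v p : 'rV[R]_n) (A C F : set 'rV[R]_n).

Let sumsq_ge0 x : 0 <= \sum_(i < n) x 0 i ^+ 2.
Proof. by apply: sumr_ge0 => i _; rewrite sqr_ge0. Qed.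

Lemma enorm_ge0 x : 0 <= enorm x.
Proof. exact: sqrtr_ge0. Qed.

Lemma enorm_sqr x : enorm x ^+ 2 = \sum_(i < n) x 0 i ^+ 2.
Proof. exact: sqr_sqrtr. Qed.

Lemma enormZ (a : R) x : enorm (a *: x) = `|a| * enorm x.
Proof.
rewrite /enorm (eq_bigr (fun i => a ^+ 2 * x 0 i ^+ 2)); last first.
  by move=> i _; rewrite mxE exprMn.
by rewrite -mulr_sumr sqrtrM ?sqr_ge0 // sqrtr_sqr.
Qed.

Lemma enorm0 : enorm (0 : 'rV[R]_n) = 0.
Proof. by rewrite -(scale0r 0) enormZ normr0 mul0r. Qed.

Lemma enormN x : enorm (- x) = enorm x.
Proof. by rewrite -scaleN1r enormZ normrN normr1 mul1r. Qed.

Lemma enorm_distC x y : enorm (x - y) = enorm (y - x).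
Proof. by rewrite -enormN opprB. Qed.

Lemma coord_le_enorm x i : `|x 0 i| <= enorm x.
Proof.
rewrite -sqrtr_sqr ler_sqrt // (bigD1 i) //= lerDl.
by apply: sumr_ge0 => j _; rewrite sqr_ge0.
Qed.

Lemma enorm_eq0 x : enorm x = 0 -> x = 0.
Proof.
by move=> x0; apply/rowP => i; rewrite mxE; apply/normr0_eq0/le_anti;
  rewrite normr_ge0 andbT -x0 coord_le_enorm.
Qed.

Lemma dot_le_enorm u v : \sum_(i < n) u 0 i * v 0 i <= enorm u * enorm v.
Proof.
have [/enorm_eq0 ->|u_neq0] := eqVneq (enorm u) 0.
  by rewrite big1 ?enorm0 ?mul0r // => i _; rewrite mxE mul0r.
have [/enorm_eq0 ->|v_neq0] := eqVneq (enorm v) 0.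
  by rewrite big1 ?enorm0 ?mulr0 // => i _; rewrite mxE mulr0.
have u_gt0 : 0 < enorm u by rewrite lt_def u_neq0 enorm_ge0.
have v_gt0 : 0 < enorm v by rewrite lt_def v_neq0 enorm_ge0.
set a := enorm u; set b := enorm v; set s := \sum_(i < n) u 0 i * v 0 i.
have : 0 <= \sum_(i < n) (b * u 0 i - a * v 0 i) ^+ 2.
  by apply: sumr_ge0 => i _; rewrite sqr_ge0.
have -> : \sum_(i < n) (b * u 0 i - a * v 0 i) ^+ 2 =
    b ^+ 2 * \sum_(i < n) u 0 i ^+ 2 - 2 * (a * b) * s
    + a ^+ 2 * \sum_(i < n) v 0 i ^+ 2.
  rewrite !mulr_sumr -sumrB -big_split /=.
  by apply: eq_bigr => i _; ring.
rewrite -!enorm_sqr -/a -/b => h.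
have ab_gt0 : 0 < a * b by rewrite mulr_gt0.
nra.
Qed.

Lemma enormD u v : enorm (u + v) <= enorm u + enorm v.
Proof.
rewrite -(@ler_pXn2r _ 2%N) // ?nnegrE ?addr_ge0 ?enorm_ge0 //.
have -> : enorm (u + v) ^+ 2 =
    enorm u ^+ 2 + 2 * \sum_(i < n) u 0 i * v 0 i + enorm v ^+ 2.
  rewrite !enorm_sqr mulr_sumr -!big_split; apply: eq_bigr => i _ /=.
  by rewrite mxE sqrrD mulr_natl.
have := dot_le_enorm u v; nra.
Qed.

Lemma enorm_triangle x y z : enorm (x - z) <= enorm (x - y) + enorm (y - z).
Proof. by have := enormD (x - y) (y - z); rewrite addrA subrK. Qed.

Lemma mxnorm_le_enorm x : `|x| <= enorm x.
Proof.
rewrite [leLHS]/Num.norm /= mx_normrE; apply: bigmax_le => [|[a b] _ /=].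
  exact: enorm_ge0.
by rewrite (ord1 a); exact: coord_le_enorm.
Qed.

Lemma enorm_le_mxnorm x : enorm x <= n%:R * `|x|.
Proof.
have coord_le_mxnorm i : `|x 0 i| <= `|x|.
  by rewrite [leRHS]/Num.norm /= mx_normrE; apply/bigmax_geP; right; exists (0, i).
have sum_le : \sum_(i < n) `|x 0 i| <= n%:R * `|x|.
  by apply: le_trans (ler_sum _ (fun i _ => coord_le_mxnorm i)) _;
    rewrite sumr_const card_ord mulr_natl.
apply: le_trans sum_le.
rewrite -(@ler_pXn2r _ 2%N) // ?nnegrE ?enorm_ge0 ?sumr_ge0 //.
rewrite enorm_sqr [leRHS]expr2 mulr_suml; apply: ler_sum => i _.
rewrite -real_normK ?num_real // expr2 ler_wpM2l // (bigD1 i) //= lerDl.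
exact: sumr_ge0.
Qed.

Lemma bounded_enorm_le (M : R) : Defs.bounded_set [set x : 'rV[R]_n | enorm x <= M].
Proof. by exists M. Qed.

Lemma dist_empty x A : ~ (exists y, A y) -> dist x A = 0.
Proof.
move=> A0; rewrite /dist (_ : [set enorm (x - y) | y in A] = set0) ?inf0 //.
by apply/seteqP; split => // r [y Ay _]; case: A0; exists y.
Qed.

Lemma dist_le x A y : A y -> dist x A <= enorm (x - y).
Proof.
by move=> Ay; apply: ge_inf; [exists 0 => _ [z _ <-]; exact: enorm_ge0 | exists y].
Qed.

Lemma dist_ge (c : R) x A : (exists y, A y) ->
  (forall y, A y -> c <= enorm (x - y)) -> c <= dist x A.
Proof.
move=> [y0 Ay0] c_le; apply: lb_le_inf; first by exists (enorm (x - y0)), y0.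
by move=> _ [y Ay <-]; exact: c_le.
Qed.

Lemma dist_ge0 x A : 0 <= dist x A.
Proof.
have [A_neq0|A0] := pselect (exists y, A y); last by rewrite dist_empty.
by apply: dist_ge => // y _; exact: enorm_ge0.
Qed.

Lemma dist_mem x A : A x -> dist x A = 0.
Proof.
by move=> Ax; apply/le_anti; rewrite dist_ge0 andbT -enorm0 -(subrr x) dist_le.
Qed.

Lemma dist_approx x A (e : R) : (exists y, A y) -> 0 < e ->
  exists y, A y /\ enorm (x - y) < dist x A + e.
Proof.
move=> [y0 Ay0] e_gt0.
have lt_e : dist x A < dist x A + e by rewrite ltrDl.
have [_ [y Ay <-] ?] := inf_lt (ex_intro _ _ (ex_intro2 _ _ y0 Ay0 erefl)) lt_e.
by exists y.
Qed.

Lemma dist_lipschitz x y A : (exists z, A z) -> dist x A <= enorm (x - y) + dist y A.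
Proof.
move=> A_neq0; rewrite -lerBlDl; apply: dist_ge => // z Az.
by rewrite lerBlDl; apply: le_trans (dist_le x Az) _; exact: enorm_triangle.
Qed.

Lemma dist_subset x A B : A `<=` B -> (exists z, A z) -> dist x B <= dist x A.
Proof. by move=> AB A_neq0; apply: dist_ge => // y /AB; exact: dist_le. Qed.

Lemma dist_approx_bounded x A a (M e : R) : enorm x <= M -> A a -> 0 < e -> e <= 1 ->
  exists p, [/\ A p, enorm (x - p) < dist x A + e & enorm p <= 2 * M + enorm a + 1].
Proof.
move=> xM Aa e_gt0 e_le1; have [p [Ap xp]] := dist_approx x (ex_intro _ a Aa) e_gt0.
exists p; split => //.
have := enorm_triangle 0 x p; have := enorm_triangle x 0 a.
have := dist_le x Aa; rewrite !sub0r !subr0 !enormN; lra.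
Qed.

Lemma convex_dist_segment C p x (t : R) : convex_set C -> C p -> 0 < t -> t <= 1 ->
  dist ((1 - t) *: p + t *: x) C <= t * dist x C.
Proof.
move=> cC Cp t_gt0 t_le1; rewrite mulrC -ler_pdivrMr //.
apply: dist_ge; first by exists p.
move=> c Cc; rewrite ler_pdivrMr //.
apply: le_trans (dist_le _ (cC c p t Cc Cp (ltW t_gt0) t_le1)) _.
have -> : (1 - t) *: p + t *: x - (t *: c + (1 - t) *: p) = t *: (x - c).
  by rewrite scalerBr [t *: c + _]addrC opprD addrACA subrr add0r.
by rewrite enormZ gtr0_norm // mulrC.
Qed.

Lemma sub_aff A : A `<=` aff A.
Proof.
move=> y Ay; exists 1%N, (fun _ => 1), (fun _ => y).
by rewrite !big_ord1 scale1r.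
Qed.

Lemma aff_segment A p x (t : R) : A p -> aff A x -> aff A ((1 - t) *: p + t *: x).
Proof.
move=> Ap [k [l [q [Aq [sum_l ->]]]]].
exists k.+1, (fun i => if unlift ord0 i is Some j then t * l j else 1 - t),
             (fun i => if unlift ord0 i is Some j then q j else p).
split; first by move=> i; case: (unlift ord0 i).
rewrite !big_ord_recl /= !unlift_none.
under eq_bigr => i _ do rewrite liftK.
under [X in _ = _ + X]eq_bigr => i _ do rewrite liftK.
rewrite -mulr_sumr sum_l mulr1 subrK scaler_sumr; split => //.
by congr (_ + _); apply: eq_bigr => i _; rewrite scalerA.
Qed.

Lemma convex_set_sum S k (w : 'I_k -> R) (p : 'I_k -> 'rV[R]_n) :
  convex_set S -> (forall i, 0 <= w i) -> \sum_(i < k) w i = 1 ->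
  (forall i, S (p i)) -> S (\sum_(i < k) w i *: p i).
Proof.
move=> cS; elim: k w p => [|k IH] w p w_ge0 sum_w Sp.
  by move: sum_w; rewrite big_ord0 => /eqP; rewrite eq_sym oner_eq0.
rewrite big_ord_recl /=; move: sum_w; rewrite big_ord_recl /=.
set s := \sum_(i < k) w (lift ord0 i) => sum_w.
have s_ge0 : 0 <= s by apply: sumr_ge0.
have [s0|s_neq0] := eqVneq s 0.
  have w0 i : w (lift ord0 i) = 0 by apply: (psumr_eq0P _ s0).
  rewrite big1 ?addr0 => [|i _]; last by rewrite w0 scale0r.
  by move: sum_w; rewrite s0 addr0 => ->; rewrite scale1r.
have S_rest : S (\sum_(i < k) (w (lift ord0 i) / s) *: p (lift ord0 i)).
  apply: IH => [i||i]; [by rewrite divr_ge0 | by rewrite -mulr_suml divff | exact: Sp].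
have := cS _ _ (w ord0) (Sp ord0) S_rest (w_ge0 _).
have -> : 1 - w ord0 = s by rewrite -sum_w addrAC subrr add0r.
rewrite scaler_sumr (eq_bigr (fun i => w (lift ord0 i) *: p (lift ord0 i))) => [|i _].
  by apply; rewrite -sum_w lerDl.
by rewrite scalerA mulrCA mulfV // mulr1.
Qed.

Lemma convex_set_wsum S k (w : 'I_k -> R) (p : 'I_k -> 'rV[R]_n) :
  convex_set S -> (forall i, 0 <= w i) -> 0 < \sum_(i < k) w i ->
  (forall i, S (p i)) -> S ((\sum_(i < k) w i)^-1 *: \sum_(i < k) w i *: p i).
Proof.
move=> cS w_ge0 sum_gt0 Sp; rewrite scaler_sumr.
under eq_bigr => i _ do rewrite scalerA.
apply: convex_set_sum => //.
- by move=> i; rewrite mulr_ge0 // invr_ge0 ltW.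
- by rewrite -mulr_sumr mulVf ?gt_eqF.
Qed.

Lemma face_setI_aff C F : is_face C F -> C `&` aff F = F.
Proof.
move=> [FC _ cF face]; apply/seteqP; split; last first.
  by move=> x Fx; split; [exact: FC | exact: sub_aff].
move=> x [Cx [k [l [p [Fp [sum_l x_def]]]]]].
set P := \sum_(i < k) l^\+ i; set N := \sum_(i < k) l^\- i.
set SP := \sum_(i < k) l^\+ i *: p i; set SN := \sum_(i < k) l^\- i *: p i.
have l_posneg i : l i = l^\+ i - l^\- i by rewrite -[in LHS](funrposBneg l).
have P_N : P - N = 1.
  by rewrite -sumrB -sum_l; apply: eq_bigr => i _; rewrite l_posneg.
have x_eq : x = SP - SN.
  by rewrite x_def -sumrB; apply: eq_bigr => i _; rewrite l_posneg scalerBl.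
have N_ge0 : 0 <= N by apply: sumr_ge0 => i _; exact: funrneg_ge0.
have P_gt0 : 0 < P by lra.
have FSP : F (P^-1 *: SP) by apply: convex_set_wsum => // i; exact: funrpos_ge0.
have [N0|N_neq0] := eqVneq N 0.
  have SN0 : SN = 0.
    by rewrite /SN big1 // => i _; rewrite (psumr_eq0P _ N0) ?scale0r // => j _;
      exact: funrneg_ge0.
  by move: FSP; rewrite x_eq SN0 subr0 (_ : P = 1) ?invr1 ?scale1r //; lra.
have N_gt0 : 0 < N by rewrite lt_def N_neq0.
have FSN : F (N^-1 *: SN) by apply: convex_set_wsum => // i; exact: funrneg_ge0.
have a_eq : P^-1 *: x + (1 - P^-1) *: (N^-1 *: SN) = P^-1 *: SP.
  rewrite x_eq scalerA (_ : (1 - P^-1) * N^-1 = P^-1) ?scalerBr ?subrK //.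
  have -> : N = P - 1 by lra.
  have P1_gt0 : 0 < P - 1 by lra.
  by field; rewrite !gt_eqF.
have [] := face _ _ (P^-1) Cx (FC _ FSN); rewrite ?a_eq ?invr_gt0 //.
by rewrite invf_lt1 //; lra.
Qed.

Lemma nbhs_enorm_ball x (e : R) : 0 < e -> nbhs x [set y | enorm (x - y) < e].
Proof.
move=> e_gt0; have n1_gt0 : 0 < n%:R + 1 :> R by rewrite ltr_wpDl.
apply/(@nbhs_normP R _ x (fun y => enorm (x - y) < e)).
exists (e / (n%:R + 1)) => /=; first by rewrite divr_gt0.
move=> y /= xy; apply: le_lt_trans (enorm_le_mxnorm _) _.
rewrite -(ltr_pM2l n1_gt0) [X in _ < X]mulrC divfK ?gt_eqF // in xy.
by apply: le_lt_trans xy; rewrite ler_wpM2r // lerDl.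
Qed.

Lemma compact_bounded_part F (M : R) : eclosed F ->
  compact (F `&` [set p | enorm p <= M]).
Proof.
move=> cF; apply: bounded_closed_compact.
  exists M; split=> [|N MN x [_ xM]]; first exact: num_real.
  by apply: le_trans (mxnorm_le_enorm x) _; apply: le_trans xM _; exact: ltW.
move=> p clp.
have near_p e : 0 < e -> exists y, (F y /\ enorm y <= M) /\ enorm (p - y) < e.
  by move=> e_gt0; have [y [[Fy yM] py]] := clp _ (nbhs_enorm_ball p e_gt0); exists y.
split; first by apply: cF => e /near_p [y [[Fy _] py]]; exists y.
apply/ler_addgt0Pr => e /near_p [y [[_ yM] py]].
by have := enorm_triangle 0 y p; rewrite !sub0r !enormN -enorm_distC; lra.
Qed.

Lemma uniform_subtransversal C F (M : R) : is_face C F ->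
  (forall xs, F xs -> subtransversal C (aff F) xs) ->
  exists delta kappa : R, [/\ 0 < delta, 0 < kappa &
    forall p z, F p -> enorm p <= M -> enorm (p - z) < delta ->
      dist z F <= kappa * (dist z C + dist z (aff F))].
Proof.
move=> fC sub; have [_ cF _ _] := fC.
(* A single parameter [i] is both the constant and the inverse radius, so that
   the compactness argument can let it tend to [+oo]. *)
pose P (i : R) p := forall z, enorm (p - z) < i^-1 ->
  dist z F <= i * (dist z C + dist z (aff F)).
have [i0 [_ i0_P]] : \forall i \near +oo, F `&` [set p | enorm p <= M] `<=` P i.
  have cover := (compact_near_coveringP _).1 (compact_bounded_part (M := M) cF).
  apply: (cover R (pinfty_nbhs R) P) => //.
  move=> xs [Fxs _]; have [_ [d [d_gt0 [k [k_gt0 hk]]]]] := sub xs Fxs.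
  rewrite (face_setI_aff fC) in hk.
  exists ([set y | enorm (xs - y) < d / 2], [set i | Num.max (2 / d) k < i]).
    split; first by apply: nbhs_enorm_ball; rewrite divr_gt0.
    by exists (Num.max (2 / d) k); split; [exact: num_real | done].
  move=> [y i] /= [xs_y]; rewrite gt_max => /andP[d_i k_i] z y_z.
  have i_gt0 : 0 < i by apply: lt_trans k_i.
  have iV_lt : i^-1 < d / 2 by rewrite invf_plt ?posrE ?divr_gt0 // invf_div.
  have z_xs : enorm (z - xs) < d.
    by rewrite enorm_distC; have := enorm_triangle xs y z; lra.
  apply: le_trans (hk _ z_xs) _.
  by rewrite ler_wpM2r ?addr_ge0 ?dist_ge0 ?ltW.
have i_gt0 : 0 < `|i0| + 1 by rewrite ltr_wpDl.
exists (`|i0| + 1)^-1, (`|i0| + 1); split; rewrite ?invr_gt0 // => p z Fp pM.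
by apply: i0_P; [rewrite (le_lt_trans (ler_norm i0)) ?ltrDl | split].
Qed.

Lemma dist_face_segment C F p x (t kappa : R) : convex_set C -> C p -> F p ->
  0 < t -> t <= 1 -> 0 <= kappa ->
  dist ((1 - t) *: p + t *: x) F <= kappa * dist ((1 - t) *: p + t *: x) C ->
  dist x F <= (1 - t) * enorm (x - p) + kappa * t * dist x C.
Proof.
set z := (1 - t) *: p + t *: x => cC Cp Fp t_gt0 t_le1 kappa_ge0 zF.
have x_z : enorm (x - z) = (1 - t) * enorm (x - p).
  rewrite -[X in X * _]ger0_norm ?subr_ge0 // -enormZ; congr enorm.
  by rewrite /z scalerBr !scalerBl !scale1r opprD addrA addrAC.
apply: le_trans (dist_lipschitz x z (ex_intro _ p Fp)) _.
rewrite x_z -mulrA lerD2l; apply: le_trans zF _.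
by rewrite ler_wpM2l // convex_dist_segment.
Qed.

Lemma amenable_bdd_lin_regular C F : F `<=` C ->
  amenable_face C F -> bdd_lin_regular_face C F.
Proof.
move=> FC am B [M hB].
have [[f0 Ff0]|F0] := pselect (exists y, F y); last first.
  by exists 1; split=> // x _; rewrite dist_empty // mul1r le_max dist_ge0.
have [k [k_gt0 hk]] := am _ (bounded_enorm_le (2 * M + enorm f0 + 1)).
exists (1 + 2 * k); split=> [|x Bx]; first lra.
set dA := dist x (aff F); set dC := dist x C.
have dA_ge0 : 0 <= dA := dist_ge0 x (aff F).
have dA_le : dA <= Num.max dA dC by rewrite le_max lexx.
have dC_le : dC <= Num.max dA dC by rewrite le_max lexx orbT.
suff : dist x F <= (1 + k) * dA + k * dC by nra.
apply: (@ler_add_small _ _ _ (1 + k)) => [|e e_gt0 e_le1]; first lra.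
have [p [Ap xp pM]] := dist_approx_bounded (hB x Bx) (sub_aff Ff0) e_gt0 e_le1.
have := hk p (conj Ap pM).
have := dist_lipschitz x p (ex_intro _ f0 Ff0).
have := dist_lipschitz p x (ex_intro _ f0 (FC _ Ff0)).
rewrite enorm_distC; nra.
Qed.

Lemma bdd_lin_regular_amenable C F :
  bdd_lin_regular_face C F -> amenable_face C F.
Proof.
move=> blr B bB; have [k [k_gt0 hk]] := blr B bB; exists k; split=> // x [Ax Bx].
by have := hk x Bx; rewrite (dist_mem Ax) (max_idPr (dist_ge0 x C)).
Qed.

Lemma bdd_lin_regular_subtransversal C F : F `<=` C ->
  bdd_lin_regular_face C F -> forall xs, F xs -> subtransversal C (aff F) xs.
Proof.
move=> FC blr xs Fxs; split; first by split; [exact: FC | exact: sub_aff].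
have [k [k_gt0 hk]] := blr _ (bounded_enorm_le (enorm xs + 1)).
exists 1; split=> //; exists k; split=> // x x_xs.
have xM : enorm x <= enorm xs + 1.
  by have := enorm_triangle x xs 0; rewrite !subr0; lra.
apply: le_trans (dist_subset x _ (ex_intro _ xs Fxs)) _.
  by move=> y Fy; split; [exact: FC | exact: sub_aff].
apply: le_trans (hk x xM) _; apply: ler_wpM2l; first exact: ltW.
by rewrite ge_max lerDr lerDl !dist_ge0.
Qed.

Lemma aff_dist_face_le C F p x (d k : R) : convex_set C -> C p -> F p -> aff F x ->
  0 < d -> 0 <= k ->
  (forall z, aff F z -> enorm (p - z) < d -> dist z F <= k * dist z C) ->
  d * dist x F <=
    d * k * dist x C + 2 * (enorm (x - p) + 1) * (enorm (x - p) - dist x F).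
Proof.
move=> cC Cp Fp Ax d_gt0 k_ge0 local.
set D := dist x F; set dC := dist x C.
set r := enorm (x - p); have r_ge0 : 0 <= r := enorm_ge0 _.
(* [t] keeps [z] within [d] of [p] while [1 / t] stays bounded in terms of [r]. *)
set s := d + 2 * (r + 1); have s_gt0 : 0 < s by rewrite /s; lra.
set t := d / s.
have t_gt0 : 0 < t by rewrite divr_gt0.
have ts : t * s = d by rewrite divfK ?gt_eqF.
have t_lt1 : t < 1 by rewrite ltr_pdivrMr // mul1r /s; lra.
have p_z : enorm (p - ((1 - t) *: p + t *: x)) < d.
  rewrite (_ : p - _ = t *: (p - x)); last first.
    by rewrite scalerBl scale1r scalerBr opprD opprB addrA [p + _]addrC subrK.
  by rewrite enormZ gtr0_norm // enorm_distC -ts ltr_pM2l // -/r /s; lra.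
have zF := local _ (aff_segment t Fp Ax) p_z.
have := dist_face_segment cC Cp Fp t_gt0 (ltW t_lt1) k_ge0 zF.
rewrite -/D -/dC -/r => D_le.
rewrite -ts (_ : 2 * (r + 1) = s - t * s); last by rewrite ts /s; ring.
nra.
Qed.

Lemma subtransversal_amenable C F : convex_set C -> is_face C F ->
  (forall xs, F xs -> subtransversal C (aff F) xs) -> amenable_face C F.
Proof.
move=> cC fC sub B [M hB]; have [FC _ _ _] := fC.
have [[f0 Ff0]|F0] := pselect (exists y, F y); last first.
  by exists 1; split=> // x _; rewrite dist_empty // mul1r dist_ge0.
have [d [k [d_gt0 k_gt0 hk]]] := uniform_subtransversal (2 * M + enorm f0 + 1) fC sub.
exists k; split=> // x [Ax Bx].
set D := dist x F; have D_ge0 : 0 <= D := dist_ge0 x F.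
apply: (@ler_add_small _ _ _ (2 * (D + 2) / d)) => [|e e_gt0 e_le1].
  by rewrite divr_ge0 ?ltW //; lra.
have [p [Fp xp pM]] := dist_approx_bounded (hB x Bx) Ff0 e_gt0 e_le1.
have local z : aff F z -> enorm (p - z) < d -> dist z F <= k * dist z C.
  by move=> Az /(hk _ _ Fp pM); rewrite (dist_mem Az) addr0.
have := aff_dist_face_le cC (FC _ Fp) Fp Ax d_gt0 (ltW k_gt0) local.
rewrite -/D => dD.
rewrite -(ler_pM2l d_gt0) mulrDr.
have -> : d * (e * (2 * (D + 2) / d)) = 2 * (D + 2) * e by field; rewrite gt_eqF.
have := enorm_ge0 (x - p); have := dist_ge0 x C; nra.
Qed.

End FaceRegularity.

Theorem proposition3p2 (R : realType) (n : nat) (C F : set 'rV[R]_n) :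
  convex_set C -> is_face C F ->
  (amenable_face C F <-> bdd_lin_regular_face C F) /\
  (bdd_lin_regular_face C F <->
     (forall xs, F xs -> subtransversal C (aff F) xs)).
Proof.
move=> cC fC; have FC : F `<=` C by case: fC.
split; split.
- exact: amenable_bdd_lin_regular.
- exact: bdd_lin_regular_amenable.
- exact: bdd_lin_regular_subtransversal.
- by move=> sub; apply: amenable_bdd_lin_regular => //; exact: subtransversal_amenable.
Qed.
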